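(* Let $n,k$ be positive integers. If every Latin array of order $n$ contains a partial transversal of length $k$, then every Latin array of order $n+1$ contains a partial transversal of length $k$.
   Context: A Latin array of order $n$ is an $n\times n$ matrix each of whose cells contains a symbol (from an arbitrary set of symbols), such that no symbol occurs more than once in any row or in any column. A partial transversal of length $\ell$ is a set of $\ell$ cells, no two in the same row or column, no two containing the same symbol. *)

From mathcomp Require Import all_boot.
Set Implicit Arguments. Unset Strict Implicit. Unset Printing Implicit Defensive.

Definition latin_array (S : Type) (n : nat) (L : 'I_n -> 'I_n -> S) : Prop :=
  (forall i j j', L i j = L i j' -> j = j') /\
  (forall i i' j, L i j = L i' j -> i = i').

Definition has_partial_transversal (S : Type) (n l : nat)
    (L : 'I_n -> 'I_n -> S) : Prop :=
  exists (r c : 'I_l -> 'I_n),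
    injective r /\ injective c /\
    (forall a b, L (r a) (c a) = L (r b) (c b) -> a = b).

From mathcomp Require Import all_boot.

Set Implicit Arguments.
Unset Strict Implicit.
Unset Printing Implicit Defensive.

(* Deleting the last row and the last column of a Latin array of order n+1
   leaves a Latin array of order n, and a partial transversal of the
   subarray is one of the whole array. *)

Section Subarray.

Variables (S : Type) (m n : nat) (L : 'I_n -> 'I_n -> S).
Variables (f g : 'I_m -> 'I_n).
Hypotheses (f_inj : injective f) (g_inj : injective g).

Lemma latin_array_sub : latin_array L -> latin_array (fun i j => L (f i) (g j)).
Proof.
case=> row_inj col_inj; split.
- by move=> i j j' /row_inj /g_inj.
- by move=> i i' j /col_inj /f_inj.
Qed.

Lemma has_partial_transversal_sub l :
  has_partial_transversal l (fun i j => L (f i) (g j)) ->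
  has_partial_transversal l L.
Proof.
case=> r [c [r_inj [c_inj sym_inj]]].
exists (f \o r), (g \o c); split; last split => //.
- exact: inj_comp.
- exact: inj_comp.
Qed.

End Subarray.

Theorem lemma2p1 (n k : nat) (hn : 0 < n) (hk : 0 < k) :
  (forall (S : Type) (L : 'I_n -> 'I_n -> S),
      latin_array L -> has_partial_transversal k L) ->
  forall (S : Type) (L : 'I_n.+1 -> 'I_n.+1 -> S),
      latin_array L -> has_partial_transversal k L.
Proof.
move=> transversal_n S L latL.
have lift_max_inj := @lift_inj n.+1 ord_max.
apply: (has_partial_transversal_sub lift_max_inj lift_max_inj).
exact/transversal_n/latin_array_sub.
Qed.
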